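(* Let $f:\mathbb{Z}^n\to\mathbb{R}\cup\{+\infty\}$ be M-convex with bounded $\operatorname{dom} f$, and $\emptyset\neq R\subsetneq N$. Let $k$ be an integer with $\underline{k}\le k\le\overline{k}-2$, let $x\in M(k)$, and let $i\in R$, $j\in N\setminus R$ minimize $f'(x;i,j)$ over $i\in R$, $j\in N\setminus R$. If $f'(x+\chi_i-\chi_j;i,j)=f'(x;i,j)$, then $f'(x+\chi_i-\chi_j;i,j)\le f'(x+\chi_i-\chi_j;h,\ell)$ for all $h\in R$, $\ell\in N\setminus R$, and $x+2\chi_i-2\chi_j\in M(k+2)$.
   Context: $N=\{1,\dots,n\}$; $\chi_i\in\{0,1\}^n$ is the $i$-th unit vector; $x(R)=\sum_{i\in R}x(i)$. For $f:\mathbb{Z}^n\to\mathbb{R}\cup\{+\infty\}$, $\operatorname{dom} f=\{x\in\mathbb{Z}^n: f(x)<+\infty\}$. $f$ is M-convex if $\operatorname{dom} f\neq\emptyset$ and for all $x,y\in\operatorname{dom} f$ and every $i$ with $x(i)>y(i)$ there is $j$ with $x(j)<y(j)$ such that $f(x)+f(y)\ge f(x-\chi_i+\chi_j)+f(y+\chi_i-\chi_j)$. $f'(x;i,j)=f(x+\chi_i-\chi_j)-f(x)$ (possibly $+\infty$). $\underline{k}=\min\{x(R):x\in\operatorname{dom} f\}$, $\overline{k}=\max\{x(R):x\in\operatorname{dom} f\}$; for $\underline{k}\le k\le\overline{k}$, $z(k)=\min\{f(x): x(R)=k,\ x\in\operatorname{dom} f\}$ and $M(k)=\{x\in\operatorname{dom}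 f: x(R)=k,\ f(x)=z(k)\}$. *)

From HB Require Import structures.
From mathcomp Require Import all_boot all_order all_algebra.
From mathcomp Require Import reals constructive_ereal.
Set Implicit Arguments. Unset Strict Implicit. Unset Printing Implicit Defensive.
Import Order.TTheory GRing.Theory Num.Theory.
Local Open Scope ring_scope.
Local Open Scope ereal_scope.

Definition vec (n : nat) := {ffun 'I_n -> int}.

Definition chi (n : nat) (i : 'I_n) : vec n := [ffun k => ((k == i)%:R : int)].

Definition xsum (n : nat) (x : vec n) (R : {set 'I_n}) : int :=
  (\sum_(i in R) x i)%R.

Definition indom (K : realType) (n : nat) (f : vec n -> \bar K) (x : vec n) : Prop :=
  f x < +oo.

(* f : Z^n -> R \cup {+oo} : never -oo *)
Definition no_minfty (K : realType) (n : nat) (f : vec n -> \bar K) : Prop :=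
  forall x, f x != -oo.

Definition Mconvex (K : realType) (n : nat) (f : vec n -> \bar K) : Prop :=
  (exists x, indom f x) /\
  forall x y, indom f x -> indom f y ->
    forall i, (y i < x i)%R ->
      exists2 j, (x j < y j)%R &
        f (x - chi i + chi j)%R + f (y + chi i - chi j)%R <= f x + f y.

Definition bounded_dom (K : realType) (n : nat) (f : vec n -> \bar K) : Prop :=
  exists B : int, forall x, indom f x -> forall i, (`|x i| <= B)%R.

Definition fder (K : realType) (n : nat) (f : vec n -> \bar K) (x : vec n) (i j : 'I_n)
  : \bar K := f (x + chi i - chi j)%R - f x.

Definition is_kmin (K : realType) (n : nat) (f : vec n -> \bar K) (R : {set 'I_n}) (k0 : int)
  : Prop :=
  (exists2 y, indom f y & xsum y R = k0) /\ forall y, indom f y -> (k0 <= xsum y R)%R.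

Definition is_kmax (K : realType) (n : nat) (f : vec n -> \bar K) (R : {set 'I_n}) (k1 : int)
  : Prop :=
  (exists2 y, indom f y & xsum y R = k1) /\ forall y, indom f y -> (xsum y R <= k1)%R.

Definition inM (K : realType) (n : nat) (f : vec n -> \bar K) (R : {set 'I_n}) (k : int)
  (x : vec n) : Prop :=
  indom f x /\ xsum x R = k /\ forall y, indom f y -> xsum y R = k -> f x <= f y.

From HB Require Import structures.
From mathcomp Require Import all_boot all_order all_algebra.
From mathcomp Require Import reals constructive_ereal.
From mathcomp Require Import zify lra.
Import Order.TTheory GRing.Theory Num.Theory.
Set Implicit Arguments. Unset Strict Implicit.
Local Open Scope ring_scope.

(* Let [d = f'(x;i,j)] be the least exchange value from [x] across [R].  The
   heart of the proof is the bound [f z >= f x + c d] for every [z] with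
   [z(R) = k + c]: exchanging [z] against [x] at some [h in R] with
   [z h > x h] either keeps [z(R)] (and moves [z] closer to [x], while the
   partner point stays on level [k]) or lowers [z(R)] by one (and the partner
   point [x + chi h - chi m] costs at least [f x + d]).  Applied with [c = 2]
   it shows that [x + 2 chi_i - 2 chi_j], whose value is [f x + 2 d] by
   hypothesis, lies in [M(k+2)], and that [d] is still the least exchange
   value from [x + chi_i - chi_j].  Finiteness of [d] comes from the same
   bound: if all exchanges from [x] were infinite, so would be every point of
   higher level, contradicting [k < kmax]. *)

Lemma chi_exchangeE n (z : vec n) a b t :
  (z + chi a - chi b) t = z t + (t == a)%:R - (t == b)%:R.
Proof. by rewrite !ffunE. Qed.

Lemma sum_indicator n (R : {set 'I_n}) a :
  \sum_(t in R) ((t == a)%:R : int) = (a \in R)%:R.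
Proof.
have [aR|aNR] := boolP (a \in R).
  by rewrite (bigD1 a) //= eqxx big1 ?addr0 // => t /andP[_ /negbTE ->].
by rewrite big1 // => t tR; case: eqP tR aNR => // -> ->.
Qed.

Lemma xsum_exchange n (z : vec n) R a b :
  xsum (z + chi a - chi b) R = xsum z R + (a \in R)%:R - (b \in R)%:R.
Proof.
rewrite /xsum; under eq_bigr do rewrite chi_exchangeE.
by rewrite !big_split sumrN /= !sum_indicator.
Qed.

Lemma xsum_lt_exists n (z x : vec n) R :
  xsum x R < xsum z R -> exists2 h, h \in R & x h < z h.
Proof.
move=> lt_xz; have /exists_inP[h hR lt_h] : [exists h in R, x h < z h].
  apply: contraLR lt_xz => /exists_inPn le_zx; rewrite -leNgt.
  by apply: ler_sum => t tR; rewrite leNgt le_zx.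
by exists h.
Qed.

Definition l1dist n (z x : vec n) : nat := \sum_(t < n) `|(z t - x t)%R|%N.

Lemma l1dist_exchange_lt n (z x : vec n) h m :
  x h < z h -> z m < x m -> (l1dist (z + chi m - chi h)%R x < l1dist z x)%N.
Proof.
move=> lt_h lt_m; have hm : (h == m) = false by apply/eqP => e; subst; lia.
rewrite /l1dist (bigD1 h) //= [X in (_ < X)%N](bigD1 h) //= chi_exchangeE eqxx hm.
rewrite -addSn; apply: leq_add; first lia.
apply: leq_sum => t th; rewrite chi_exchangeE (negbTE th).
by case: eqVneq => [->|]; lia.
Qed.

Section LevelBounds.
Variables (K : realType) (n : nat) (f : vec n -> \bar K) (R : {set 'I_n}).
Hypotheses (f_nminfty : no_minfty f) (f_Mconvex : Mconvex f).

Lemma indom_fineK p : indom f p -> f p = (fine (f p))%:E.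
Proof. by move=> pdom; rewrite fineK // fin_numE f_nminfty -ltey. Qed.

Lemma Mconvex_exchange_up (z x : vec n) :
  indom f z -> indom f x -> xsum x R < xsum z R ->
  exists h m, [/\ h \in R, (l1dist (z + chi m - chi h)%R x < l1dist z x)%N &
    (f (z + chi m - chi h)%R + f (x + chi h - chi m)%R <= f z + f x)%E].
Proof.
move=> zdom xdom /xsum_lt_exists[h hR lt_h].
have [m lt_m] := f_Mconvex.2 z x zdom xdom h lt_h.
by rewrite addrAC => exch; exists h, m; split=> //; apply: l1dist_exchange_lt.
Qed.

Variables (x : vec n) (fx : K).
Hypotheses (f_x : f x = fx%:E)
  (x_level_min : forall p, xsum p R = xsum x R -> (fx%:E <= f p)%E).

Lemma level_lower_bound (d : K) :
  (forall h l, h \in R -> l \notin R -> ((fx + d)%:E <= f (x + chi h - chi l)%R)%E) ->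
  forall (c : nat) z, xsum z R = xsum x R + c%:R -> ((fx + c%:R * d)%:E <= f z)%E.
Proof.
move=> exch_ge; elim=> [|c IHc] z.
  by rewrite addr0 mul0r addr0; apply: x_level_min.
have [N] := ubnP (l1dist z x); elim: N z => // N IHN z dist_z level_z.
case fz_eq: (f z) => [fz| |]; [|exact: leey|by have := f_nminfty z; rewrite fz_eq].
have zdom : indom f z by rewrite /indom fz_eq ltey.
have xdom : indom f x by rewrite /indom f_x ltey.
have [|h [m [hR dist_lt exch]]] := Mconvex_exchange_up zdom xdom.
  by rewrite level_z; lia.
rewrite fz_eq f_x in exch.
have level_z' := xsum_exchange z R m h; have level_x' := xsum_exchange x R h m.
rewrite hR in level_z' level_x'.
have [lb_z' lb_x'] : ((fx + (c.+1%:R - (m \notin R)%:R) * d)%:E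
    <= f (z + chi m - chi h)%R)%E /\ ((fx + (m \notin R)%:R * d)%:E
    <= f (x + chi h - chi m)%R)%E.
  case mR: (m \in R) => /=; rewrite ?subr0 ?mul0r ?addr0 ?mul1r.
  - split; last by apply: x_level_min; rewrite level_x' mR; lia.
    by apply: IHN; [apply: leq_trans dist_lt _|rewrite level_z' mR level_z; lia].
  - split; last exact: exch_ge (negbT mR).
    by rewrite -natr1 addrK; apply: IHc; rewrite level_z' mR level_z; lia.
have := le_trans (leeD lb_z' lb_x') exch.
by rewrite -!EFinD !lee_fin; move: (m \notin R)%:R => b; nra.
Qed.

Lemma level_up_infinite z :
  (forall h l, h \in R -> l \notin R -> f (x + chi h - chi l)%R = +oo%E) ->
  xsum x R < xsum z R -> f z = +oo%E.
Proof.
move=> exch_inf lt_xz.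
case fz_eq: (f z) => [fz| |] //; last by have := f_nminfty z; rewrite fz_eq.
exfalso; pose c := `|xsum z R - xsum x R|%N.
have c_ge1 : (1 <= c%:R :> K) by rewrite ler1n; lia.
have : ((fx + c%:R * (`|fz - fx| + 1))%:E <= f z)%E.
  apply: level_lower_bound => [h l hR lR|]; first by rewrite exch_inf ?leey.
  by rewrite /c; lia.
have : 0 <= (c%:R - 1) * (`|fz - fx| + 1) by rewrite mulr_ge0 // ?subr_ge0 ?addr_ge0.
rewrite fz_eq lee_fin; have := ler_norm (fz - fx); nra.
Qed.

Variables (i j : 'I_n).
Hypothesis least_exchange :
  forall h l, h \in R -> l \notin R -> (fder f x i j <= fder f x h l)%E.

Lemma least_exchange_finite z :
  indom f z -> xsum x R < xsum z R -> indom f (x + chi i - chi j)%R.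
Proof.
move=> zdom lt_xz; apply: contraT; rewrite /indom ltey negbK => /eqP fy_inf.
suff fz_inf : f z = +oo%E by move: zdom; rewrite /indom fz_inf ltxx.
apply: level_up_infinite lt_xz => h l hR lR.
have := least_exchange hR lR; rewrite /fder fy_inf f_x /=.
by case: (f _) (f_nminfty (x + chi h - chi l)%R) => // v _; rewrite -EFinB leye_eq.
Qed.

Lemma least_exchange_ge fy : f (x + chi i - chi j)%R = fy%:E ->
  forall h l, h \in R -> l \notin R -> ((fx + (fy - fx))%:E <= f (x + chi h - chi l)%R)%E.
Proof.
move=> f_y h l hR lR; have := least_exchange hR lR.
by rewrite /fder f_y f_x -EFinB leeBrDr // -EFinD addrC.
Qed.

End LevelBounds.

Local Open Scope ereal_scope.

Lemma inM_level_min (K : realType) n (f : vec n -> \bar K) R k x :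
  inM f R k x -> forall p, xsum p R = k -> f x <= f p.
Proof.
move=> [_ [_ x_min]] p p_level.
have [pdom|] := boolP (f p < +oo); first exact: x_min.
by rewrite ltey negbK => /eqP ->; apply: leey.
Qed.

Theorem mainTheorem8 (K : realType) (n : nat) (f : vec n -> \bar K) (R : {set 'I_n})
  (kmin kmax k : int) (x : vec n) (i j : 'I_n) :
  no_minfty f -> Mconvex f -> bounded_dom f ->
  R != set0 -> R \proper [set: 'I_n] ->
  is_kmin f R kmin -> is_kmax f R kmax ->
  (kmin <= k)%R -> (k <= kmax - 2)%R ->
  inM f R k x ->
  i \in R -> j \notin R ->
  (forall h l, h \in R -> l \notin R -> fder f x i j <= fder f x h l) ->
  fder f (x + chi i - chi j)%R i j = fder f x i j ->
  (forall h l, h \in R -> l \notin R ->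
     fder f (x + chi i - chi j)%R i j <= fder f (x + chi i - chi j)%R h l) /\
  inM f R (k + 2)%R (x + chi i *+ 2 - chi j *+ 2)%R.
Proof.
move=> f_nminfty f_Mconvex _ _ _ _ [[z zdom z_level] _] _ k_le xM iR jR d_min d_stable.
have [xdom [x_level _]] := xM.
have fx_eq := indom_fineK f_nminfty xdom; set fx := fine (f x) in fx_eq.
have x_min p : xsum p R = xsum x R -> fx%:E <= f p.
  by rewrite -fx_eq x_level; apply: inM_level_min.
have ydom : indom f (x + chi i - chi j)%R.
  apply: (least_exchange_finite f_nminfty f_Mconvex fx_eq x_min d_min zdom).
  by rewrite x_level z_level; lia.
have fy_eq := indom_fineK f_nminfty ydom; set fy := fine _ in fy_eq.
have exch_ge := least_exchange_ge fx_eq d_min fy_eq.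
have level2_ge p : xsum p R = (k + 2)%R -> (fx + 2%:R * (fy - fx))%:E <= f p.
  move=> p_level; apply: (level_lower_bound f_nminfty f_Mconvex fx_eq x_min exch_ge).
  by rewrite p_level x_level.
split.
  move=> h l hR lR; rewrite d_stable /fder fy_eq fx_eq -EFinB leeBrDr // -EFinD.
  apply: le_trans (level2_ge _ _); first by rewrite lee_fin; lra.
  by rewrite !xsum_exchange iR (negbTE jR) hR (negbTE lR) x_level; lia.
have -> : (x + chi i *+ 2 - chi j *+ 2 = x + chi i - chi j + chi i - chi j)%R.
  by apply/ffunP => t; rewrite !ffunE; lia.
move: d_stable; rewrite /fder fy_eq fx_eq -EFinB.
case fw_eq: (f _) (f_nminfty (x + chi i - chi j + chi i - chi j)%R) => [fw| |] // _.
rewrite -EFinB => -[fw_val]; split; first by rewrite /indom fw_eq ltey.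
split; first by rewrite !xsum_exchange iR (negbTE jR) x_level; lia.
by move=> p _ p_level; rewrite fw_eq (le_trans _ (level2_ge p p_level)) // lee_fin; lra.
Qed.
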